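(* Let $n\ge 3$ and $m\ge 2$ be integers, let $S_n=K_{1,n}$ be the star with $n$ leaves and $P_m$ the path on $m$ vertices. Then $AT(S_n+_S P_m)=3$.
   Context: For an orientation $D$, a subdigraph is Eulerian if every vertex has equal in- and outdegree in it; $D$ is an AT-orientation if the numbers of Eulerian subgraphs with an even and with an odd number of arcs differ; $AT(G)$ is the smallest $k$ such that $G$ has an AT-orientation of maximum outdegree at most $k-1$. $S(G)$ is obtained from $G$ by subdividing each edge once, with vertex set identified with $V(G)\cup E(G)$. $G+_S H$ has vertex set $(V(G)\cup E(G))\times V(H)$, with $(u_1,u_2)\sim(v_1,v_2)$ iff [$u_1=v_1\in V(G)$ and $u_2v_2\in E(H)$] or [$u_2=v_2$ and $u_1v_1\in E(S(G))$]. *)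

(* Simple graphs are given as a relation [g : rel T] on a
   finite type [T] (the concrete graphs below are symmetric and irreflexive). *)
From mathcomp Require Import all_boot.
Set Implicit Arguments. Unset Strict Implicit. Unset Printing Implicit Defensive.

Section Graphs.
Variables (T : finType) (g : rel T).

Definition is_orientation (o : rel T) : Prop :=
  (forall u v, o u v -> g u v) /\ (forall u v, g u v -> o u v != o v u).

Definition outdeg (o : rel T) (v : T) : nat := #|[set w | o v w]|.

Definition eulerian (o : rel T) (H : {set T * T}) : bool :=
  (H \subset [set a | o a.1 a.2]) &&
  [forall v, #|[set a in H | a.1 == v]| == #|[set a in H | a.2 == v]|].

Definition n_even_eulerian (o : rel T) : nat :=
  #|[set H : {set T * T} | eulerian o H && ~~ odd #|H|]|.
Definition n_odd_eulerian (o : rel T) : nat :=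
  #|[set H : {set T * T} | eulerian o H && odd #|H|]|.

Definition AT_orientation (o : rel T) : Prop :=
  is_orientation o /\ n_even_eulerian o <> n_odd_eulerian o.

Definition has_AT_orientation (d : nat) : Prop :=
  exists o : rel T, AT_orientation o /\ forall v, outdeg o v <= d.

Definition AT_number (k : nat) : Prop :=
  0 < k /\ has_AT_orientation k.-1 /\
  forall j, 0 < j -> j < k -> ~ has_AT_orientation j.-1.

Definition is_edge (e : {set T}) : bool :=
  [exists u, exists v, g u v && (e == [set u; v])].
Definition edge_type := {e : {set T} | is_edge e}.

(* The subdivision S(g), vertex set V(g) ∪ E(g). *)
Definition sub_vertex := (T + edge_type)%type.
Definition sub_adj : rel sub_vertex := fun x y =>
  match x, y with
  | inl v, inr e => v \in val e
  | inr e, inl v => v \in val e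
  | _, _ => false
  end.

End Graphs.

Definition splus_adj (T : finType) (g : rel T) (U : finType) (h : rel U)
  : rel (sub_vertex g * U) := fun x y =>
  match x.1, y.1 with
  | inl u1, inl v1 => (u1 == v1) && h x.2 y.2
  | _, _ => false
  end || ((x.2 == y.2) && sub_adj x.1 y.1).

Definition star_adj (n : nat) : rel 'I_n.+1 := fun i j =>
  (i != j) && ((val i == 0) || (val j == 0)).

Definition path_adj (m : nat) : rel 'I_m := fun i j =>
  ((val i).+1 == val j) || ((val j).+1 == val i).
Arguments star_adj n : clear implicits.
Arguments path_adj m : clear implicits.
Arguments splus_adj {T} g {U} h.

(* An orientation of S(G) +_S P_m of maximum outdegree 2 is obtained by directing
   every edge down the rank that puts the subdivision vertices on top and the
   copy of V(G) in layer i at height m - i: a subdivision vertex then points to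
   the two ends of its edge and a vertex of layer i only to its copy in layer
   i + 1.  Such an orientation is acyclic, so the empty arc set is its only
   Eulerian subdigraph.
   Conversely, S_n +_S P_m contains S(P_3) +_S P_2, which has 11 edges on 10
   vertices, whereas a graph with an orientation of maximum outdegree 1 has at
   most as many edges as vertices. *)

From mathcomp Require Import all_boot zify.
Set Implicit Arguments. Unset Strict Implicit. Unset Printing Implicit Defensive.

Section OrientationCounting.
Variables (T : finType) (g : rel T) (o : rel T).

Lemma sum_arcs_inj_le_outdeg (T' : finType) (f : T' -> T) u :
  injective f -> \sum_v (o (f u) (f v) : nat) <= outdeg o (f u).
Proof.
move=> f_inj; have -> : \sum_v (o (f u) (f v) : nat) = #|[set v | o (f u) (f v)]|.
  by rewrite -sum1dep_card [RHS]big_mkcond; apply: eq_bigr => v _; case: (o _ _).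
rewrite /outdeg -(card_imset _ f_inj); apply/subset_leq_card/subsetP => _ /imsetP[v + ->].
by rewrite !inE.
Qed.

Lemma sum_adj_le_outdeg (T' : finType) (h : rel T') (f : T' -> T) (d : nat) :
  injective f -> {homo f : u v / h u v >-> g u v} -> is_orientation g o ->
  (forall v, outdeg o v <= d) -> \sum_u \sum_v (h u v : nat) <= d.*2 * #|T'|.
Proof.
move=> f_inj f_hom [_ o_or] o_out.
pose S := \sum_u \sum_v (o (f u) (f v) : nat).
have adj_le_arcs u v : (h u v : nat) <= o (f u) (f v) + o (f v) (f u).
  by case huv: (h u v) => //; move: (o_or _ _ (f_hom _ _ huv)); do 2 case: (o _ _).
have S_le : S <= d * #|T'|.
  rewrite -sum1_card big_distrr /=; apply: leq_sum => u _.
  by rewrite muln1; exact: leq_trans (sum_arcs_inj_le_outdeg u f_inj) (o_out _).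
apply: (@leq_trans (S + \sum_u \sum_v (o (f v) (f u) : nat))).
  by rewrite -big_split; apply: leq_sum => u _; rewrite -big_split; apply: leq_sum.
by rewrite [X in S + X]exchange_big addnn -doubleMl leq_double.
Qed.

End OrientationCounting.

Section DescendingOrientation.
Variables (T : finType) (g o : rel T) (rk : T -> nat).
Hypothesis o_desc : forall u v, o u v -> rk v < rk u.

Lemma eulerian_descending H : eulerian o H -> H = set0.
Proof.
case/andP=> /subsetP H_arcs /forallP balanced.
have [//|[a aH]] := set_0Vmem H.
have [b bH b_max] := @arg_maxnP _ a (mem H) (fun b => rk b.1) aH.
have : 0 < #|[set c in H | c.2 == b.1]|.
  rewrite -(eqP (balanced b.1)); apply/card_gt0P; exists b.
  by rewrite !inE (bH : b \in H) eqxx.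
case/card_gt0P => c; rewrite !inE => /andP[cH /eqP cb].
have := H_arcs c cH; rewrite inE => /o_desc.
by rewrite cb ltnNge => /negP[]; exact: b_max.
Qed.

Lemma descending_AT_orientation : is_orientation g o -> AT_orientation g o.
Proof.
move=> o_or; split=> //.
have eulerian_set0 : eulerian o set0.
  rewrite /eulerian sub0set; apply/forallP => v.
  by apply/eqP; apply: eq_card => x; rewrite !inE.
have eulerianE H : eulerian o H = (H == set0).
  by apply/idP/eqP => [/eulerian_descending | ->].
rewrite /n_even_eulerian /n_odd_eulerian.
have -> : [set H | eulerian o H && ~~ odd #|H|] = [set set0].
  by apply/setP => H; rewrite !inE eulerianE; case: eqP => // ->; rewrite cards0.
have -> : [set H | eulerian o H && odd #|H|] = set0.
  by apply/setP => H; rewrite !inE eulerianE; case: eqP => // ->; rewrite cards0.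
by rewrite cards1 cards0.
Qed.

End DescendingOrientation.

Section SplusPathOrientation.
Variables (T : finType) (g : rel T) (m : nat).
Local Notation G := (splus_adj g (path_adj m)).

Definition splus_path_rank (x : sub_vertex g * 'I_m) : nat :=
  if x.1 is inl _ then m - x.2 else m.+1.
Local Notation rk := splus_path_rank.

Definition splus_path_orientation : rel (sub_vertex g * 'I_m) :=
  fun x y => G x y && (rk y < rk x).
Local Notation o := splus_path_orientation.

Lemma splus_path_sym : symmetric G.
Proof.
case=> [[u|e] i] [[v|f] j]; rewrite /splus_adj /= (eq_sym i) //.
by rewrite !andbF !orbF (eq_sym u) /path_adj orbC.
Qed.

Lemma splus_path_rank_neq x y : G x y -> rk x != rk y.
Proof.
case: x y => [[u|e] i] [[v|f] j]; move: (ltn_ord i) (ltn_ord j);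
  rewrite /splus_path_rank /splus_adj /= ?andbF ?orbF //=; try lia.
by move=> ? ? /andP[_]; rewrite /path_adj /= => /orP[]/eqP; lia.
Qed.

Lemma splus_path_orientation_is_orientation : is_orientation G o.
Proof.
split=> [x y /andP[] // | x y Gxy]; rewrite /o Gxy -splus_path_sym Gxy /=.
by case: ltngtP (splus_path_rank_neq Gxy).
Qed.

Lemma splus_path_outdeg_inl u i : outdeg o (inl u, i) <= 1.
Proof.
apply/card_le1_eqP => -[[v1|f1] j1] [[v2|f2] j2];
  rewrite !inE /o /splus_path_rank /splus_adj /= ?andbF ?orbF /path_adj /=; try lia.
move=> /andP[/andP[/eqP <- p1] l1] /andP[/andP[/eqP <- p2] l2].
suff : j1 = j2 :> nat by move/val_inj->.
by move: p1 p2 l1 l2 (ltn_ord i) => /orP[]/eqP + /orP[]/eqP; lia.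
Qed.

Lemma splus_path_outdeg_inr e i : outdeg o (inr e, i) <= 2.
Proof.
have /existsP[u /existsP[w /andP[_ /eqP e_uw]]] := valP e.
pose layer v : sub_vertex g * 'I_m := (inl v, i).
apply: (@leq_trans #|layer @: val e|).
  apply/subset_leq_card/subsetP => -[[v|f] j]; rewrite !inE /o /splus_adj /= ?andbF //.
  by case/andP=> /andP[/eqP <- ve] _; apply/imsetP; exists v.
apply: leq_trans (leq_imset_card _ _) _.
by rewrite e_uw cards2; case: (_ != _).
Qed.

Lemma splus_path_has_AT_orientation : has_AT_orientation G 2.
Proof.
exists o; split.
  apply: (descending_AT_orientation (rk := rk)) => [x y /andP[] //|].
  exact: splus_path_orientation_is_orientation.
case=> [[u|e] i]; last exact: splus_path_outdeg_inr.
exact: leq_trans (splus_path_outdeg_inl u i) _.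
Qed.

End SplusPathOrientation.

(* [theta] is S(P_3) +_S P_2, the subdivided path S(P_3) being P_5 with the
   original vertices at the even positions: two 6-cycles sharing an edge. *)
Definition theta : rel ('I_5 * 'I_2) := fun x y =>
  ((x.1 == y.1) && ~~ odd x.1 && (x.2 != y.2)) ||
  ((x.2 == y.2) && ((x.1.+1 == y.1) || (y.1.+1 == x.1))).

Lemma theta_adj_count : \sum_u \sum_v (theta u v : nat) = 22.
Proof.
rewrite -(pair_bigA _ (fun i j => \sum_v (theta (i, j) v : nat))).
under eq_bigr do under eq_bigr do
  rewrite -(pair_bigA _ (fun k l => (theta _ (k, l) : nat))).
by rewrite /= !big_ord_recr !big_ord0.
Qed.

Lemma is_edge_star_center n (i : 'I_n.+1) :
  0 < i -> is_edge (star_adj n) [set ord0; i].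
Proof.
move=> i_gt0; apply/existsP; exists ord0; apply/existsP; exists i.
by rewrite /star_adj eqxx andbT -val_eqE /= neq_ltn i_gt0.
Qed.

Section StarPathTheta.
Variables (n m : nat).
Hypotheses (n_ge2 : 1 < n) (m_ge2 : 1 < m).

Let c : 'I_n.+1 := ord0.
Let a : 'I_n.+1 := Ordinal (leqW n_ge2).
Let b : 'I_n.+1 := Ordinal (n_ge2 : 2 < n.+1).
Let ea : edge_type (star_adj n) := Sub [set ord0; a] (is_edge_star_center (isT : 0 < a)).
Let eb : edge_type (star_adj n) := Sub [set ord0; b] (is_edge_star_center (isT : 0 < b)).

Definition P5_to_sub_star (x : 'I_5) : sub_vertex (star_adj n) :=
  match nat_of_ord x with
  | 0 => inl a | 1 => inr ea | 2 => inl c | 3 => inr eb | _ => inl b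
  end.

Lemma P5_to_sub_star_inj : injective P5_to_sub_star.
Proof.
pose code (s : sub_vertex (star_adj n)) : nat :=
  match s with
  | inl v => if v == c then 2 else if v == a then 0 else 4
  | inr e => if a \in val e then 1 else 3
  end.
have codeK x : code (P5_to_sub_star x) = x.
  case: x => [[|[|[|[|[|x]]]]] hx] //=; rewrite ?inE -?val_eqE //=.
move=> x y /(congr1 code); rewrite !codeK; exact: val_inj.
Qed.

Definition theta_to_splus (x : 'I_5 * 'I_2) : sub_vertex (star_adj n) * 'I_m :=
  (P5_to_sub_star x.1, widen_ord m_ge2 x.2).

Lemma theta_to_splus_inj : injective theta_to_splus.
Proof.
by move=> [x i] [y j] [/P5_to_sub_star_inj -> /val_inj ->].
Qed.

Lemma theta_to_splus_hom :
  {homo theta_to_splus : u v / theta u v >-> splus_adj (star_adj n) (path_adj m) u v}.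
Proof.
case=> x i [y j]; rewrite /theta /=.
case/orP=> [/andP[/andP[/eqP <- x_even] ij] | /andP[/eqP <- xy]].
  case: x x_even => [[|[|[|[|[|x]]]]] hx] //= _;
  by rewrite /splus_adj /= andbF orbF; case: i j ij => [[|[|i]] hi] [[|[|j]] hj].
case: x y xy => [[|[|[|[|[|x]]]]] hx] [[|[|[|[|[|y]]]]] hy] //= _;
  by rewrite /splus_adj /= eqxx !inE eqxx ?orbT.
Qed.

Lemma splus_star_path_no_AT_orientation d :
  d <= 1 -> ~ has_AT_orientation (splus_adj (star_adj n) (path_adj m)) d.
Proof.
move=> d_le1 [o [[o_or _] o_out]].
have := sum_adj_le_outdeg theta_to_splus_inj theta_to_splus_hom o_or o_out.
by rewrite theta_adj_count card_prod !card_ord; lia.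
Qed.

End StarPathTheta.

Theorem corollary3p5 (n m : nat) :
  3 <= n -> 2 <= m ->
  AT_number (splus_adj (star_adj n) (path_adj m)) 3.
Proof.
move=> n_ge3 m_ge2; split=> //; split; first exact: splus_path_has_AT_orientation.
move=> j j_gt0 j_lt3; apply: splus_star_path_no_AT_orientation => //; lia.
Qed.
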